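(* Let $T$ be an equilateral hyperbolic triangle with side length $a$ and angle $\alpha$, and suppose that either $e^a\in\mathbb{Q}$ or $e^{i\alpha}\in\mathbb{Q}[i]$. Let $\ell$ be the length of a median of $T$ (the geodesic segment from a vertex to the midpoint of the opposite side, which for an equilateral triangle coincides with the area bisector from that vertex). Then $e^\ell\notin\mathbb{Q}$.
   Context: Triangles are non-degenerate, bounded triangles in the hyperbolic plane (curvature $-1$). An area bisector from a vertex is the geodesic segment from that vertex to the opposite side dividing the triangle into two triangles of equal area. *)

(* hyperbolic plane H^2 (curvature -1) in the hyperboloid model. *)
From Stdlib Require Import Reals Ratan QArith Qreals.
Open Scope R_scope.

Record pt := Pt { x0 : R; x1 : R; x2 : R }.

Definition mink (p q : pt) : R := - x0 p * x0 q + x1 p * x1 q + x2 p * x2 q.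

Definition onH (p : pt) : Prop := mink p p = -1 /\ 0 < x0 p.

Definition arcosh (u : R) : R := ln (u + sqrt (u * u - 1)).

Definition hdist (p q : pt) : R := arcosh (- mink p q).

Definition padd (p q : pt) : pt := Pt (x0 p + x0 q) (x1 p + x1 q) (x2 p + x2 q).
Definition pscale (c : R) (p : pt) : pt := Pt (c * x0 p) (c * x1 p) (c * x2 p).

(* initial tangent vector at a of the geodesic from a to b
   (projection of b onto the tangent space T_a H = a^perp) *)
Definition tangent (a b : pt) : pt := padd b (pscale (mink a b) a).

Definition hangle (a b c : pt) : R :=
  let u := tangent a b in let v := tangent a c in
  acos (mink u v / (sqrt (mink u u) * sqrt (mink v v))).

Definition is_rational (x : R) : Prop := exists q : Q, Q2R q = x.

Definition expi_in_Qi (theta : R) : Prop := is_rational (cos theta) /\ is_rational (sin theta).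

Definition is_midpoint (m b c : pt) : Prop :=
  onH m /\ hdist b m = hdist b c / 2 /\ hdist m c = hdist b c / 2.

From Stdlib Require Import Reals Ratan QArith Qreals ZArith Znumtheory Lia Lra Psatz.

(* Put t = e^(a/2) > 1.  In the hyperboloid model the midpoint of BC is (B + C) / (2 cosh(a/2)),
   so the median ell satisfies cosh ell = cosh a / cosh(a/2) = (t^4 + 1) / (t (t^2 + 1)) and
   sinh^2 ell = (t^2 - 1)^2 (t^4 + t^2 + 1) / (t^2 (t^2 + 1)^2).  If e^ell is rational, so are
   cosh ell and sinh ell.  Each hypothesis then makes t rational: directly from e^a = t^2 and
   cosh ell, or, for the angle (cos alpha = c/(c+1) with c = cosh a), because sin alpha rational
   forces sqrt(2c + 1) rational and then sinh ell / sqrt(2c + 1) = (t^2 - 1)/(t^2 + 1).  But then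
   Y = sinh ell * t (t^2 + 1) / (t^2 - 1) is a rational point on Y^2 = t^4 + t^2 + 1 with t > 0,
   impossible by Euler's theorem that x^4 + x^2 y^2 + y^4 is never a square for x, y > 0. *)

Open Scope Z_scope.

Lemma coprime_intro a b :
  (forall d, (d | a) -> (d | b) -> (d | 1)) -> Z.gcd a b = 1.
Proof.
  intro H. apply Zis_gcd_gcd; [lia|].
  constructor; auto using Z.divide_1_l.
Qed.

Lemma coprime_common_divisor a b d : Z.gcd a b = 1 -> (d | a) -> (d | b) -> (d | 1).
Proof. intros H ha hb. rewrite <- H. now apply Z.gcd_greatest. Qed.

Lemma coprime_divisors a b a' b' :
  Z.gcd a b = 1 -> (a' | a) -> (b' | b) -> Z.gcd a' b' = 1.
Proof.
  intros H ha hb. apply coprime_intro. intros d da db.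
  exact (coprime_common_divisor a b d H (Z.divide_trans _ _ _ da ha) (Z.divide_trans _ _ _ db hb)).
Qed.

Lemma coprime_mul_r a b c : Z.gcd a b = 1 -> Z.gcd a c = 1 -> Z.gcd a (b * c) = 1.
Proof. rewrite !Zgcd_1_rel_prime. apply rel_prime_mult. Qed.

Lemma coprime_squares a b : Z.gcd a b = 1 -> Z.gcd (a * a) (b * b) = 1.
Proof.
  intro H. apply coprime_mul_r; rewrite Z.gcd_comm; apply coprime_mul_r;
    rewrite Z.gcd_comm; exact H.
Qed.

Lemma gcd_cofactors a b : a <> 0 ->
  exists a1 b1, 0 < Z.gcd a b /\ a = a1 * Z.gcd a b /\ b = b1 * Z.gcd a b /\ Z.gcd a1 b1 = 1.
Proof.
  intro ha. set (g := Z.gcd a b).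
  assert (hg : 0 < g).
  { pose proof (Z.gcd_nonneg a b). assert (g <> 0) by (intro E; apply Z.gcd_eq_0 in E; lia). lia. }
  destruct (Z.gcd_divide_l a b) as [a1 Ea]. destruct (Z.gcd_divide_r a b) as [b1 Eb].
  fold g in Ea, Eb. exists a1, b1. repeat split; auto.
  pose proof (Z.gcd_div_gcd a b g ltac:(lia) eq_refl) as H.
  rewrite Ea, Eb, !Z.div_mul in H by lia. exact H.
Qed.

Lemma square_of_square_multiple n s r : s <> 0 -> n * (s * s) = r * r -> exists y, n = y * y.
Proof.
  intros hs E.
  destruct (gcd_cofactors s r hs) as [s1 [r1 [hg [Es [Er g1]]]]].
  set (g := Z.gcd s r) in *.
  assert (E1 : n * (s1 * s1) = r1 * r1).
  { apply Z.mul_reg_l with (g * g); [lia|]. rewrite Es, Er in E. lia. }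
  assert (d1 : (s1 | 1)).
  { apply (coprime_common_divisor s1 r1); [exact g1 | apply Z.divide_refl|].
    apply Z.gauss with r1; [exists (n * s1); lia | exact g1]. }
  exists r1. rewrite <- E1. destruct (Z.divide_1_r _ d1) as [-> | ->]; ring.
Qed.

Lemma coprime_square_factor a b c :
  0 < a -> 0 < b -> Z.gcd a b = 1 -> a * b = c * c -> exists x, 0 < x /\ a = x * x.
Proof.
  intros ha hb hab habc.
  destruct (gcd_cofactors a c ltac:(lia)) as [a1 [c1 [hx [Ea [Ec g1]]]]].
  set (x := Z.gcd a c) in *.
  (* a1 b = x c1^2 with a1 coprime to c1^2, hence x = y a1 and then y divides a and b *)
  assert (Eb : a1 * b = x * (c1 * c1)).
  { apply Z.mul_reg_l with x; [lia|]. rewrite Ea, Ec in habc. lia. }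
  assert (ha1 : 0 < a1) by nia.
  assert (dx : (a1 | x)).
  { apply Z.gauss with (c1 * c1); [exists b; lia | now apply coprime_mul_r]. }
  destruct dx as [y Ey].
  assert (Eb' : b = y * (c1 * c1)).
  { apply Z.mul_reg_l with a1; [lia|]. rewrite Eb, Ey. ring. }
  assert (y1 : (y | 1)).
  { apply (coprime_common_divisor a b); [exact hab | |].
    - exists (a1 * a1). rewrite Ea, Ey. ring.
    - exists (c1 * c1). rewrite Eb'. ring. }
  assert (y = 1) by (apply Z.divide_1_r_nonneg; [nia | exact y1]).
  exists a1. split; [exact ha1|]. rewrite Ea, Ey. subst y. ring.
Qed.

Lemma coprime_product_square a b c :
  0 < a -> 0 < b -> 0 <= c -> Z.gcd a b = 1 -> a * b = c * c ->
  exists x y, 0 < x /\ 0 < y /\ a = x * x /\ b = y * y /\ c = x * y.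
Proof.
  intros ha hb hc hab habc.
  destruct (coprime_square_factor a b c) as [x [hx Ex]]; auto.
  destruct (coprime_square_factor b a c) as [y [hy Ey]]; auto; [now rewrite Z.gcd_comm | lia |].
  exists x, y. repeat split; auto. subst. nia.
Qed.

Lemma coprime_product_fourth_power a b f :
  0 < a -> 0 < b -> 0 < f -> Z.gcd a b = 1 -> a * b = f * f * (f * f) ->
  exists g h, 0 < g /\ 0 < h /\ a = g * g * (g * g) /\ b = h * h * (h * h) /\ f = g * h.
Proof.
  intros ha hb hf hab E.
  destruct (coprime_product_square a b (f * f)) as [s [t [hs [ht [Es [Et Est]]]]]];
    auto; [nia|].
  assert (gst : Z.gcd s t = 1).
  { apply (coprime_divisors a b); auto; [rewrite Es | rewrite Et]; apply Z.divide_factor_l. }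
  destruct (coprime_product_square s t f) as [g [h [hg [hh [Eg [Eh Egh]]]]]]; auto; [lia|].
  exists g, h. subst. auto.
Qed.

Lemma square_mod_4 x : exists k, x * x = 4 * k \/ x * x = 4 * k + 1.
Proof.
  pose proof (Z.div2_odd x) as E. set (y := Z.div2 x) in E.
  destruct (Z.odd x); cbn [Z.b2z] in E; rewrite E;
    [exists (y * y + y); right | exists (y * y); left]; ring.
Qed.

Lemma odd_square_mod_4 x : Z.odd x = true -> exists k, x * x = 4 * k + 1.
Proof.
  intro hx. pose proof (Z.div2_odd x) as E. rewrite hx in E. cbn [Z.b2z] in E.
  exists (Z.div2 x * Z.div2 x + Z.div2 x). rewrite E at 1 2. ring.
Qed.

Lemma odd_divisor_coprime_2 a d : Z.odd a = true -> (d | a) -> Z.gcd d 2 = 1.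
Proof.
  intros ha [k Ek].
  assert (hd : Z.odd d = true) by (subst a; rewrite Z.odd_mul in ha; now apply andb_prop in ha).
  rewrite Z.gcd_comm, <- Z.gcd_mod, Zmod_odd, hd by lia. reflexivity.
Qed.

Definition euler_quartic (x y : Z) : Z := x * x * (x * x) + x * x * (y * y) + y * y * (y * y).

Lemma euler_quartic_sym x y : euler_quartic x y = euler_quartic y x.
Proof. unfold euler_quartic. ring. Qed.

(* m^4 + 4 m^2 f^2 + 16 f^4 = z^2 with m odd and coprime to f:  writing M = m^2, F = 2 f^2,
   z^2 - (M + F)^2 = 3 F^2, so the two (even) factors of the left side, halved, are
   coprime positive integers p, q with p q = 3 f^4 and q - p = M + F. *)
Lemma quartic_factorisation m f z :
  0 < f -> 0 <= z -> Z.odd m = true -> Z.gcd m f = 1 ->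
  euler_quartic m (2 * f) = z * z ->
  exists p q, 0 < p /\ 0 < q /\ Z.gcd p q = 1 /\
    p * q = 3 * (f * f * (f * f)) /\ m * m = q - p - 2 * (f * f).
Proof.
  intros hf hz hm gmf Ez.
  pose proof (Z.div2_odd m) as Em. rewrite hm in Em. cbn [Z.b2z] in Em.
  set (i := Z.div2 m) in Em.
  pose proof (Z.div2_odd z) as Ezk. set (k := Z.div2 z) in Ezk.
  assert (hzodd : Z.odd z = true).
  { destruct (Z.odd z); [reflexivity|]. exfalso. cbn [Z.b2z] in Ezk.
    unfold euler_quartic in Ez. rewrite Em, Ezk in Ez. ring_simplify in Ez. lia. }
  rewrite hzodd in Ezk. cbn [Z.b2z] in Ezk.
  set (p := k - 2 * (i * i) - 2 * i - f * f).
  set (q := k + 2 * (i * i) + 2 * i + 1 + f * f).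
  assert (Epq : 4 * (p * q) = 4 * (3 * (f * f * (f * f)))).
  { transitivity (z * z - (m * m + 2 * (f * f)) * (m * m + 2 * (f * f))).
    - rewrite Ezk, Em. unfold p, q. ring.
    - rewrite <- Ez. unfold euler_quartic. ring. }
  assert (hq : 0 < q) by (unfold q; nia).
  assert (hp : 0 < p) by (apply (Z.mul_pos_cancel_r p q hq); nia).
  exists p, q. repeat split; auto; [| lia | unfold p, q; rewrite Em; ring].
  (* a common divisor d of p and q is coprime to f (it divides m^2 = q - p - 2 f^2),
     and d^2 divides p q = 3 f^4, so d^2 divides 3 *)
  apply coprime_intro. intros d dp dq.
  assert (gdf : Z.gcd d f = 1).
  { apply coprime_intro. intros e ed ef.
    apply (coprime_common_divisor (m * m) f); [| | exact ef].
    { rewrite Z.gcd_comm. apply coprime_mul_r; now rewrite Z.gcd_comm. }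
    replace (m * m) with (q - p - f * (2 * f)) by (unfold p, q; rewrite Em; ring).
    apply Z.divide_sub_r; [apply Z.divide_sub_r | now apply Z.divide_mul_l].
    - exact (Z.divide_trans _ _ _ ed dq).
    - exact (Z.divide_trans _ _ _ ed dp). }
  assert (dd3 : (d * d | 3)).
  { apply Z.gauss with (f * f * (f * f)).
    - replace (f * f * (f * f) * 3) with (p * q) by lia.
      destruct dp as [a Ea], dq as [b Eb]. exists (a * b). rewrite Ea, Eb. ring.
    - now apply coprime_squares, coprime_mul_r. }
  assert (d <> 0) by (intro; subst d; destruct dp as [j Ej]; lia).
  assert (d * d <= 3) by (apply Z.divide_pos_le; [lia | exact dd3]).
  assert (d = 1 \/ d = -1) as [-> | ->] by nia; [apply Z.divide_refl | exists (-1); ring].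
Qed.

(* m^2 = (3 g^2 + h^2)(g^2 - h^2) is impossible for odd m: modulo 4 the right-hand side
   is 0 or 3. *)
Lemma odd_square_ne_quartic_product m g h :
  Z.odd m = true -> m * m <> (3 * (g * g) + h * h) * (g * g - h * h).
Proof.
  intros hm E.
  destruct (odd_square_mod_4 m hm) as [k Ek].
  destruct (square_mod_4 g) as [a [Ea | Ea]], (square_mod_4 h) as [b [Eb | Eb]];
    rewrite Ea, Eb in E; ring_simplify in E; lia.
Qed.

(* Two odd coprime positive integers r, s with r^2 - s^2 = 4 g^2 and 3 r^2 + s^2 = 4 h^2:
   (r - s)/2 and (r + s)/2 are coprime with product g^2, hence squares K^2 and L^2, and
   then r = K^2 + L^2, s = L^2 - K^2 turn 3 r^2 + s^2 = 4 h^2 into K^4 + K^2 L^2 + L^4 = h^2. *)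
Lemma quartic_from_odd_squares r s g h :
  0 < r -> 0 < s -> 0 < g -> Z.odd r = true -> Z.odd s = true -> Z.gcd r s = 1 ->
  r * r - s * s = 4 * (g * g) -> 3 * (r * r) + s * s = 4 * (h * h) ->
  exists K L, 0 < K /\ 0 < L /\ Z.gcd K L = 1 /\ K * L = g /\ euler_quartic K L = h * h.
Proof.
  intros hr hs hg or os grs Eg Eh.
  pose proof (Z.div2_odd r) as Er. pose proof (Z.div2_odd s) as Es.
  rewrite or in Er. rewrite os in Es. cbn [Z.b2z] in Er, Es.
  set (k := Z.div2 r - Z.div2 s). set (l := Z.div2 r + Z.div2 s + 1).
  assert (Erkl : r = k + l) by (unfold k, l; lia).
  assert (Eskl : s = l - k) by (unfold k, l; lia).
  assert (Ekl : k * l = g * g) by (rewrite Erkl, Eskl in Eg; lia).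
  assert (hl : 0 < l) by (unfold l; lia).
  assert (hk : 0 < k) by (apply (Z.mul_pos_cancel_r k l hl); nia).
  assert (gkl : Z.gcd k l = 1).
  { apply coprime_intro. intros d dk dl. apply (coprime_common_divisor r s d grs).
    - rewrite Erkl. now apply Z.divide_add_r.
    - rewrite Eskl. now apply Z.divide_sub_r. }
  destruct (coprime_product_square k l g) as [K [L [hK [hL [EK [EL EKL]]]]]]; auto; [lia|].
  exists K, L. repeat split; auto.
  - apply (coprime_divisors k l K L gkl); [rewrite EK | rewrite EL]; apply Z.divide_factor_l.
  - assert (4 * euler_quartic K L = 4 * (h * h)); [|lia].
    rewrite <- Eh, Erkl, Eskl, EK, EL. unfold euler_quartic. ring.
Qed.

(* m^2 = (h^2 + g^2)(h^2 - 3 g^2) with m odd and g, h coprime: the two factors are odd,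
   coprime and positive, hence odd squares r^2 and s^2 as required above. *)
Lemma quartic_from_factorisation m g h :
  0 < g -> 0 < h -> Z.gcd g h = 1 -> Z.odd m = true ->
  m * m = (h * h + g * g) * (h * h - 3 * (g * g)) ->
  exists K L, 0 < K /\ 0 < L /\ Z.gcd K L = 1 /\ K * L = g /\ euler_quartic K L = h * h.
Proof.
  intros hg hh ggh hm Em.
  set (A := h * h + g * g) in Em. set (B := h * h - 3 * (g * g)) in Em.
  assert (oAB : Z.odd A = true /\ Z.odd B = true).
  { apply andb_prop. rewrite <- Z.odd_mul, <- Em, Z.odd_mul, hm. reflexivity. }
  assert (hA : 0 < A) by (unfold A; nia).
  assert (hB : 0 < B).
  { apply (Z.mul_pos_cancel_l A B hA). rewrite <- Em.
    assert (m <> 0) by (intros ->; discriminate hm). nia. }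
  assert (gAB : Z.gcd A B = 1).
  { (* a common divisor is odd and divides 4 g^2 = A - B and 4 h^2 = 3 A + B *)
    apply coprime_intro. intros d dA dB.
    assert (d4 : Z.gcd d (2 * 2) = 1)
      by (apply coprime_mul_r; apply (odd_divisor_coprime_2 A); tauto).
    apply (coprime_common_divisor (g * g) (h * h)); [now apply coprime_squares | |];
      apply Z.gauss with (2 * 2); auto.
    - replace (2 * 2 * (g * g)) with (A - B) by (unfold A, B; ring). now apply Z.divide_sub_r.
    - replace (2 * 2 * (h * h)) with (3 * A + B) by (unfold A, B; ring).
      apply Z.divide_add_r; [apply Z.divide_mul_r|]; auto. }
  destruct (coprime_product_square A B (Z.abs m)) as [r [s [hr [hs [Er [Es _]]]]]];
    auto; [lia | now rewrite Z.abs_square |].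
  assert (odd_root : forall x, Z.odd (x * x) = Z.odd x)
    by (intro x; rewrite Z.odd_mul; apply Bool.andb_diag).
  apply (quartic_from_odd_squares r s g h); auto.
  - rewrite <- odd_root, <- Er. tauto.
  - rewrite <- odd_root, <- Es. tauto.
  - apply (coprime_divisors A B r s gAB); [rewrite Er | rewrite Es]; apply Z.divide_factor_l.
  - rewrite <- Er, <- Es. unfold A, B. ring.
  - rewrite <- Er, <- Es. unfold A, B. ring.
Qed.

Lemma quartic_descent m f z :
  0 < f -> 0 <= z -> Z.odd m = true -> Z.gcd m f = 1 ->
  euler_quartic m (2 * f) = z * z ->
  exists K L h, 0 < K /\ 0 < L /\ Z.gcd K L = 1 /\ K * L <= f /\ euler_quartic K L = h * h.
Proof.
  intros hf hz hm gmf Ez.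
  destruct (quartic_factorisation m f z) as [p [q [hp [hq [gpq [Epq Em]]]]]]; auto.
  assert (d3 : (3 | p * q)) by (rewrite Epq; apply Z.divide_factor_l).
  apply prime_mult in d3; [|exact prime_3].
  destruct d3 as [[p' Ep] | [q' Eq]].
  - (* p = 3 g^4, q = h^4, f = g h and m^2 = (h^2 + g^2)(h^2 - 3 g^2) *)
    assert (gpq' : Z.gcd p' q = 1)
      by (apply (coprime_divisors p q p' q gpq); [exists 3; lia | apply Z.divide_refl]).
    destruct (coprime_product_fourth_power p' q f) as [g [h [hg [hh [Eg [Eh Efgh]]]]]];
      auto; [lia | lia |].
    assert (ggh : Z.gcd g h = 1).
    { apply (coprime_divisors p q g h gpq).
      - exists (g * g * g * 3). rewrite Ep, Eg. ring.
      - exists (h * h * h). rewrite Eh. ring. }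
    destruct (quartic_from_factorisation m g h) as [K [L [hK [hL [gKL [EKL EQ]]]]]]; auto.
    + rewrite Em, Ep, Eg, Eh, Efgh. ring.
    + exists K, L, h. repeat split; auto. rewrite EKL, Efgh. nia.
  - (* p = h^4, q = 3 g^4 and m^2 = (3 g^2 + h^2)(g^2 - h^2), which is impossible *)
    assert (gpq' : Z.gcd p q' = 1)
      by (apply (coprime_divisors p q p q' gpq); [apply Z.divide_refl | exists 3; lia]).
    destruct (coprime_product_fourth_power p q' f) as [h [g [hh [hg [Eh [Eg Efgh]]]]]];
      auto; [lia | lia |].
    exfalso. apply (odd_square_ne_quartic_product m g h hm).
    rewrite Em, Eq, Eg, Eh, Efgh. ring.
Qed.

(* Infinite descent on the product m e: no coprime positive m, e make
   m^4 + m^2 e^2 + e^4 a square. *)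
Lemma euler_quartic_not_square_coprime n : forall m e z,
  0 < m -> 0 < e -> Z.gcd m e = 1 -> m * e < Z.of_nat n -> euler_quartic m e <> z * z.
Proof.
  induction n as [|n IH]; intros m e z hm he gme hn Ez; [lia|].
  (* one of m, e is odd and the other even, say e = 2 f: apply the descent step *)
  assert (even_case : forall m' f, 0 < m' -> 0 < f -> Z.gcd m' (2 * f) = 1 ->
            Z.odd m' = true -> m' * (2 * f) < Z.of_nat (S n) ->
            euler_quartic m' (2 * f) <> z * z).
  { intros m' f hm' hf g' om' hn' E.
    destruct (quartic_descent m' f (Z.abs z)) as [K [L [h [hK [hL [gKL [hKL EKL]]]]]]];
      auto; [lia | | now rewrite Z.abs_square |].
    - apply (coprime_divisors m' (2 * f)); [exact g' | apply Z.divide_refl |].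
      apply Z.divide_factor_r.
    - apply (IH K L h); auto. nia. }
  pose proof (Z.div2_odd m) as Em. pose proof (Z.div2_odd e) as Ee.
  destruct (Z.odd m) eqn:om, (Z.odd e) eqn:oe; cbn [Z.b2z] in Em, Ee.
  - (* both odd: m^4 + m^2 e^2 + e^4 is 3 modulo 4 *)
    destruct (odd_square_mod_4 m om) as [a Ea], (odd_square_mod_4 e oe) as [b Eb].
    destruct (square_mod_4 z) as [c [Ec | Ec]];
      unfold euler_quartic in Ez; rewrite Ea, Eb, Ec in Ez; ring_simplify in Ez; lia.
  - rewrite Ee, Z.add_0_r in *. apply (even_case m (Z.div2 e)); auto; lia.
  - rewrite Em, Z.add_0_r in *. rewrite euler_quartic_sym in Ez.
    apply (even_case e (Z.div2 m)); auto; [lia | now rewrite Z.gcd_comm | lia].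
  -
    assert (d2 : (2 | 1)).
    { apply (coprime_common_divisor m e 2 gme); [exists (Z.div2 m) | exists (Z.div2 e)]; lia. }
    apply Z.divide_pos_le in d2; lia.
Qed.

Theorem euler_quartic_not_square m e z : 0 < m -> 0 < e -> euler_quartic m e <> z * z.
Proof.
  intros hm he Ez.
  destruct (gcd_cofactors m e ltac:(lia)) as [m1 [e1 [hd [Em [Ee g1]]]]].
  set (d := Z.gcd m e) in *.
  destruct (square_of_square_multiple (euler_quartic m1 e1) (d * d) z) as [y Ey]; [nia | |].
  - rewrite <- Ez, Em, Ee. unfold euler_quartic. ring.
  - apply (euler_quartic_not_square_coprime (Z.to_nat (m1 * e1 + 1)) m1 e1 y); auto; nia.
Qed.

Close Scope Z_scope.
Open Scope R_scope.

Lemma rat_IZR n : is_rational (IZR n).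
Proof. exists (inject_Z n). unfold Q2R; simpl. field. Qed.

Lemma rat_plus x y : is_rational x -> is_rational y -> is_rational (x + y).
Proof. intros [p <-] [q <-]. exists (p + q)%Q. apply Q2R_plus. Qed.

Lemma rat_mult x y : is_rational x -> is_rational y -> is_rational (x * y).
Proof. intros [p <-] [q <-]. exists (p * q)%Q. apply Q2R_mult. Qed.

Lemma rat_minus x y : is_rational x -> is_rational y -> is_rational (x - y).
Proof. intros [p <-] [q <-]. exists (p - q)%Q. apply Q2R_minus. Qed.

Lemma rat_inv x : is_rational x -> is_rational (/ x).
Proof.
  intros [p <-]. destruct (Qeq_dec p 0) as [e | n].
  - exists 0%Q. rewrite (Qeq_eqR _ _ e). unfold Q2R; simpl. rewrite Rmult_0_l, Rinv_0. ring.
  - exists (/ p)%Q. now apply Q2R_inv.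
Qed.

Lemma rat_div x y : is_rational x -> is_rational y -> is_rational (x / y).
Proof. intros. apply rat_mult; [|apply rat_inv]; assumption. Qed.

#[local] Hint Resolve rat_IZR rat_plus rat_mult rat_minus rat_inv rat_div : rat.

(* The curve Y^2 = t^4 + t^2 + 1 has no rational point with t > 0: clearing denominators
   t = P/D, Y = N/S gives (P^4 + P^2 D^2 + D^4) S^2 = (N D^2)^2, contradicting Euler. *)
Lemma no_rational_quartic_point t Y :
  0 < t -> is_rational t -> is_rational Y -> t * t * (t * t) + t * t + 1 = Y * Y -> False.
Proof.
  intros ht [[P D] Et] [[N S] EY] E. unfold Q2R in Et, EY; simpl in Et, EY.
  assert (hD : 0 < IZR (Z.pos D)) by (apply IZR_lt; lia).
  assert (hS : 0 < IZR (Z.pos S)) by (apply IZR_lt; lia).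
  assert (EP : IZR P = t * IZR (Z.pos D)) by (rewrite <- Et; field; lra).
  assert (EN : IZR N = Y * IZR (Z.pos S)) by (rewrite <- EY; field; lra).
  assert (hP : (0 < P)%Z) by (apply lt_IZR; rewrite EP; nra).
  assert (EZ : (euler_quartic P (Z.pos D) * (Z.pos S * Z.pos S)
                = (N * Z.pos D * Z.pos D) * (N * Z.pos D * Z.pos D))%Z).
  { apply eq_IZR. unfold euler_quartic. rewrite !mult_IZR, !plus_IZR, !mult_IZR, EP, EN.
    transitivity (IZR (Z.pos D) * IZR (Z.pos D) * (IZR (Z.pos D) * IZR (Z.pos D))
                  * (IZR (Z.pos S) * IZR (Z.pos S)) * (t * t * (t * t) + t * t + 1)); [ring|].
    rewrite E. ring. }
  destruct (square_of_square_multiple _ (Z.pos S) _ ltac:(lia) EZ) as [z Ez].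
  exact (euler_quartic_not_square P (Z.pos D) z hP ltac:(lia) Ez).
Qed.

Lemma exp_arcosh u : 1 <= u -> exp (arcosh u) = u + sqrt (u * u - 1).
Proof.
  intro hu. unfold arcosh. apply exp_ln.
  pose proof (sqrt_pos (u * u - 1)). lra.
Qed.

Lemma hdist_cosh p q d : hdist p q = d -> 0 < d -> - mink p q = (exp d + / exp d) / 2.
Proof.
  unfold hdist, arcosh. intros H hd.
  set (u := - mink p q) in *. set (X := u + sqrt (u * u - 1)) in *.
  assert (hX : 0 < X).
  { destruct (Rlt_dec 0 X) as [h | h]; [exact h|].
    exfalso. unfold ln in H. destruct (Rlt_dec 0 X); [contradiction | lra]. }
  assert (eX : exp d = X) by (rewrite <- H; now apply exp_ln).
  assert (X1 : 1 < X) by (rewrite <- eX, <- exp_0; now apply exp_increasing).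
  destruct (Rlt_dec (u * u - 1) 0) as [n | n].
  - exfalso. unfold X in X1. rewrite sqrt_neg_0 in X1 by lra. nra.
  - (* X = u + sqrt(u^2 - 1) is a root of X^2 - 2 u X + 1 *)
    assert (sq : sqrt (u * u - 1) * sqrt (u * u - 1) = u * u - 1) by (apply sqrt_sqrt; lra).
    assert (K : X * X + 1 = 2 * u * X) by (unfold X; nra).
    assert (iX : / X = 2 * u - X).
    { apply Rmult_eq_reg_l with X; [|lra]. rewrite Rinv_r by lra. nra. }
    rewrite eX, iX. lra.
Qed.

Lemma mink_sym p q : mink p q = mink q p.
Proof. unfold mink. ring. Qed.

Lemma mink_padd_r p q r : mink p (padd q r) = mink p q + mink p r.
Proof. unfold mink, padd; simpl. ring. Qed.

Lemma mink_pscale_r p c q : mink p (pscale c q) = c * mink p q.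
Proof. unfold mink, pscale; simpl. ring. Qed.

Lemma mink_padd_l p q r : mink (padd p q) r = mink p r + mink q r.
Proof. unfold mink, padd; simpl. ring. Qed.

Lemma mink_pscale_l c p q : mink (pscale c p) q = c * mink p q.
Proof. unfold mink, pscale; simpl. ring. Qed.

(* A null vector orthogonal to a timelike vector vanishes (reversed Cauchy-Schwarz). *)
Lemma null_orthogonal_timelike s d :
  mink s s < 0 -> mink d s = 0 -> mink d d = 0 -> d = Pt 0 0 0.
Proof.
  destruct s as [s0 s1 s2], d as [d0 d1 d2]. unfold mink; simpl. intros Hs Hds Hdd.
  (* (d0 s0)^2 = (d1 s1 + d2 s2)^2 <= (d1^2 + d2^2)(s1^2 + s2^2) = d0^2 (s1^2 + s2^2) *)
  assert (CS : (d0 * s0) * (d0 * s0) <= (d0 * d0) * (s1 * s1 + s2 * s2)).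
  { replace (d0 * s0) with (d1 * s1 + d2 * s2) by lra.
    replace (d0 * d0) with (d1 * d1 + d2 * d2) by lra.
    pose proof (Rle_0_sqr (d1 * s2 - d2 * s1)). unfold Rsqr in *. nra. }
  assert (d0 * d0 = 0).
  { apply Rle_antisym; [|apply Rle_0_sqr].
    apply Rmult_le_reg_r with (s0 * s0 - s1 * s1 - s2 * s2); nra. }
  assert (d0 = 0) by nra. subst d0.
  f_equal; nra.
Qed.

Lemma midpoint_normalized_sum B C M w :
  mink B B = -1 -> mink C C = -1 -> mink M M = -1 -> 0 < w ->
  mink B C = 1 - 2 * (w * w) -> mink M B = - w -> mink M C = - w ->
  M = pscale (/ (2 * w)) (padd B C).
Proof.
  intros hB hC hM hw hBC hMB hMC.
  set (S := padd B C).
  assert (hSS : mink S S = - 4 * (w * w)).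
  { unfold S. rewrite !mink_padd_l, !mink_padd_r, (mink_sym C B). lra. }
  assert (hMS : mink M S = - 2 * w) by (unfold S; rewrite mink_padd_r; lra).
  (* D = M - S / (2 w) is null and orthogonal to the timelike S *)
  set (D := padd M (pscale (- / (2 * w)) S)).
  assert (hDS : mink D S = 0).
  { unfold D. rewrite mink_padd_l, mink_pscale_l, hSS, hMS. field. lra. }
  assert (hDD : mink D D = 0).
  { unfold D. rewrite !mink_padd_l, !mink_padd_r, !mink_pscale_l, !mink_pscale_r.
    rewrite (mink_sym S M), hM, hSS, hMS. field. lra. }
  assert (hD0 : D = Pt 0 0 0) by (apply (null_orthogonal_timelike S); auto; nra).
  destruct M as [m0 m1 m2]. unfold D, padd, pscale in hD0; simpl in hD0. injection hD0.
  unfold pscale; simpl. intros. f_equal; lra.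
Qed.

Lemma mink_tangent a b c : mink (tangent a b) (tangent a c) =
  mink b c + 2 * mink a b * mink a c + mink a b * mink a c * mink a a.
Proof. unfold tangent, mink, padd, pscale; simpl. ring. Qed.

(* cosh of the median of an equilateral triangle of side a, as a function of t = e^(a/2):
   cosh ell = cosh a / cosh (a/2) = (t^4 + 1) / (t (t^2 + 1)). *)
Definition median_cosh (t : R) : R := (t * t * (t * t) + 1) / (t * (t * t + 1)).

(* In an equilateral triangle ABC of side a the midpoint M of BC is (B + C) / (2 cosh (a/2)),
   so that -<A, M> = cosh a / cosh (a/2) = median_cosh (e^(a/2)). *)
Lemma equilateral_median_cosh A B C M a :
  onH A -> onH B -> onH C -> 0 < a ->
  hdist A B = a -> hdist B C = a -> hdist C A = a -> is_midpoint M B C ->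
  - mink A M = median_cosh (exp (a / 2)).
Proof.
  intros [hA _] [hB _] [hC _] ha hAB hBC hCA [[hM _] [hBM hMC]].
  rewrite hBC in hBM, hMC.
  set (t := exp (a / 2)).
  assert (ht : 0 < t) by apply exp_pos.
  assert (Ea : exp a = t * t) by (unfold t; rewrite <- exp_plus; f_equal; lra).
  set (w := (t + / t) / 2).
  assert (hw : 0 < w) by (unfold w; pose proof (Rinv_0_lt_compat t ht); lra).
  assert (cosh_a : (exp a + / exp a) / 2 = 2 * (w * w) - 1)
    by (rewrite Ea; unfold w; field; lra).
  pose proof (hdist_cosh _ _ _ hAB ha) as eAB.
  pose proof (hdist_cosh _ _ _ hBC ha) as eBC.
  pose proof (hdist_cosh _ _ _ hCA ha) as eCA.
  pose proof (hdist_cosh _ _ _ hBM ltac:(lra)) as eBM.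
  pose proof (hdist_cosh _ _ _ hMC ltac:(lra)) as eMC.
  fold t w in eBM, eMC. rewrite cosh_a in eAB, eBC, eCA.
  rewrite (midpoint_normalized_sum B C M w); auto;
    [| lra | rewrite mink_sym; lra | lra].
  rewrite mink_pscale_r, mink_padd_r, (mink_sym A C).
  replace (mink A B + mink C A) with (2 - 4 * (w * w)) by lra.
  unfold median_cosh, w. field. split; [nra | lra].
Qed.

Lemma half_sum_inverse_gt_1 x : 1 < x -> 1 < (x + / x) / 2.
Proof.
  intro hx. assert (E : (x + / x) / 2 - 1 = (x - 1) * (x - 1) / (2 * x)) by (field; lra).
  assert (0 < (x - 1) * (x - 1) / (2 * x)); [|lra].
  apply Rdiv_lt_0_compat; [apply Rmult_lt_0_compat |]; lra.
Qed.

(* The angle of an equilateral triangle with side a is arccos (c / (c + 1)), c = cosh a: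
   the tangent vectors at A satisfy <u, v> = c^2 - c and <u, u> = <v, v> = c^2 - 1. *)
Lemma equilateral_angle A B C a :
  onH A -> onH B -> onH C -> 0 < a ->
  hdist A B = a -> hdist B C = a -> hdist C A = a ->
  hangle A B C = acos ((exp a + / exp a) / 2 / ((exp a + / exp a) / 2 + 1)).
Proof.
  intros [hA _] [hB _] [hC _] ha hAB hBC hCA.
  pose proof (hdist_cosh _ _ _ hAB ha) as eAB.
  pose proof (hdist_cosh _ _ _ hBC ha) as eBC.
  pose proof (hdist_cosh _ _ _ hCA ha) as eCA.
  set (c := (exp a + / exp a) / 2) in *.
  assert (hc : 1 < c).
  { apply half_sum_inverse_gt_1. rewrite <- exp_0. now apply exp_increasing. }
  unfold hangle; cbv zeta. rewrite !mink_tangent, hA, hB, hC.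
  replace (mink A B) with (- c) by lra. replace (mink B C) with (- c) by lra.
  replace (mink A C) with (- c) by (rewrite mink_sym; lra).
  rewrite sqrt_sqrt by nra. f_equal. field. nra.
Qed.

(* median_cosh t is a hyperbolic cosine: t^4 + 1 - t (t^2 + 1) = (t - 1)^2 (t^2 + t + 1). *)
Lemma median_cosh_ge_1 t : 0 < t -> 1 <= median_cosh t.
Proof.
  intro ht. assert (d : 0 < t * (t * t + 1)) by nra.
  apply (Rmult_le_reg_r (t * (t * t + 1))); [exact d|].
  unfold median_cosh, Rdiv. rewrite Rmult_assoc, Rinv_l, Rmult_1_r by lra.
  assert (0 <= (t - 1) * (t - 1) * (t * t + t + 1))
    by (apply Rmult_le_pos; [apply Rle_0_sqr | nra]).
  nra.
Qed.

(* sinh^2 ell = (t^2 - 1)^2 (t^4 + t^2 + 1) / (t^2 (t^2 + 1)^2): the quartic of Euler's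
   theorem appears in the square of sinh ell. *)
Lemma median_sinh_sq t : 0 < t ->
  median_cosh t * median_cosh t - 1
  = (t * t - 1) * (t * t - 1) * (t * t * (t * t) + t * t + 1)
    / (t * t * ((t * t + 1) * (t * t + 1))).
Proof. intro ht. unfold median_cosh. field. split; nra. Qed.

(* If x = u + q with u^2 - q^2 = 1 (as for x = e^ell, u = cosh ell, q = sinh ell) and x is
   rational, then so are u = (x + 1/x)/2 and q = (x - 1/x)/2. *)
Lemma rational_cosh_sinh x u q :
  x = u + q -> u * u - q * q = 1 -> is_rational x -> is_rational u /\ is_rational q.
Proof.
  intros Ex Euq rx.
  assert (hx : x <> 0) by (intro E0; rewrite E0 in Ex; nra).
  assert (ix : / x = u - q).
  { apply Rmult_eq_reg_l with x; [|exact hx]. rewrite Rinv_r by exact hx. nra. }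
  split; [replace u with ((x + / x) / 2) | replace q with ((x - / x) / 2)];
    try (rewrite ix, Ex; field); auto with rat.
Qed.

Lemma rational_from_side t :
  0 < t -> is_rational (t * t) -> is_rational (median_cosh t) -> is_rational t.
Proof.
  intros ht rt2 ru.
  replace t with ((t * t * (t * t) + 1) / ((t * t + 1) * median_cosh t)); auto with rat.
  unfold median_cosh. field. split; nra.
Qed.

(* If e^(i alpha) is in Q[i] with cos alpha = c / (c + 1), c > 1, then c is rational and so is
   rho = sqrt(2 c + 1) = (c + 1) sin alpha. *)
Lemma rational_angle_cosh c :
  1 < c -> expi_in_Qi (acos (c / (c + 1))) ->
  exists rho, is_rational rho /\ 0 < rho /\ rho * rho = 2 * c + 1.
Proof.
  intros hc [rcos rsin].
  set (x := c / (c + 1)) in *.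
  assert (hx : 0 <= x <= 1).
  { assert (E : x = 1 - / (c + 1)) by (unfold x; field; lra).
    assert (0 < / (c + 1) < 1); [|lra].
    split; [apply Rinv_0_lt_compat | rewrite <- Rinv_1; apply Rinv_lt_contravar]; lra. }
  rewrite cos_acos in rcos by lra. rewrite sin_acos in rsin by lra.
  assert (rc : is_rational c).
  { replace c with (x / (1 - x)) by (unfold x; field; lra). auto with rat. }
  exists (sqrt (1 - x²) * (c + 1)).
  assert (hrho : sqrt (1 - x²) * (c + 1) * (sqrt (1 - x²) * (c + 1)) = 2 * c + 1).
  { transitivity (sqrt (1 - x²) * sqrt (1 - x²) * ((c + 1) * (c + 1))); [ring|].
    rewrite sqrt_sqrt by (unfold Rsqr; nra). unfold x, Rsqr. field. lra. }
  repeat split; [auto with rat | | exact hrho].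
  assert (0 <= sqrt (1 - x²) * (c + 1)) by (apply Rmult_le_pos; [apply sqrt_pos | lra]).
  nra.
Qed.

(* Angle condition: if e^(i alpha) is in Q[i], where cos alpha = c / (c + 1) and
   c = cosh a = (t^2 + t^-2)/2, and sinh ell is rational, then e^a = t^2 is rational:
   rho = sqrt(2 c + 1) = sqrt(t^4 + t^2 + 1) / t is rational and
   sinh ell / rho = (t^2 - 1) / (t^2 + 1). *)
Lemma rational_square_from_angle t q :
  1 < t -> 0 <= q -> q * q = median_cosh t * median_cosh t - 1 -> is_rational q ->
  expi_in_Qi (acos ((t * t + / (t * t)) / 2 / ((t * t + / (t * t)) / 2 + 1))) ->
  is_rational (t * t).
Proof.
  intros ht hq0 hq rq hangle.
  set (c := (t * t + / (t * t)) / 2) in *.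
  assert (hc : 1 < c) by (apply half_sum_inverse_gt_1; nra).
  destruct (rational_angle_cosh c hc hangle) as [rho [rrho [hrho0 hrho]]].
  (* q (t^2 + 1) and (t^2 - 1) rho are nonnegative with equal squares *)
  assert (Eq : q * (t * t + 1) = (t * t - 1) * rho).
  { apply Rsqr_inj; [apply Rmult_le_pos; nra | apply Rmult_le_pos; nra |]. unfold Rsqr.
    transitivity (q * q * ((t * t + 1) * (t * t + 1))); [ring|].
    transitivity ((t * t - 1) * (t * t - 1) * (rho * rho)); [|ring].
    rewrite hq, median_sinh_sq, hrho by lra. unfold c. field. split; nra. }
  set (r := q / rho).
  assert (Er : r = (t * t - 1) / (t * t + 1)).
  { unfold r. replace q with ((t * t - 1) * rho / (t * t + 1)) by (rewrite <- Eq; field; nra).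
    field. split; [nra | lra]. }
  replace (t * t) with ((1 + r) / (1 - r)) by (rewrite Er; field; split; nra).
  unfold r. auto with rat.
Qed.

(* The conclusion: if t = e^(a/2) and sinh ell are both rational, then
   Y = sinh ell * t (t^2 + 1) / (t^2 - 1) is a rational solution of Y^2 = t^4 + t^2 + 1,
   which Euler's theorem forbids. *)
Lemma median_sinh_irrational t q :
  1 < t -> is_rational t -> is_rational q ->
  q * q = median_cosh t * median_cosh t - 1 -> False.
Proof.
  intros ht rt rq hq.
  set (k := t * (t * t + 1) / (t * t - 1)).
  apply (no_rational_quartic_point t (q * k)); [lra | exact rt | unfold k; auto 8 with rat |].
  transitivity (q * q * (k * k)); [|ring].
  rewrite hq, median_sinh_sq by lra. unfold k. field. split; nra.
Qed.

Theorem proposition4p2 (A B C : pt) (a : R) :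
  onH A -> onH B -> onH C ->
  0 < a ->
  hdist A B = a -> hdist B C = a -> hdist C A = a ->
  (is_rational (exp a) \/ expi_in_Qi (hangle A B C)) ->
  forall M : pt, is_midpoint M B C ->
  ~ is_rational (exp (hdist A M)).
Proof.
  intros hA hB hC ha hAB hBC hCA hyp M hM hrat.
  set (t := exp (a / 2)).
  assert (ht : 1 < t) by (unfold t; rewrite <- exp_0; apply exp_increasing; lra).
  assert (Ea : exp a = t * t) by (unfold t; rewrite <- exp_plus; f_equal; lra).
  (* e^ell = cosh ell + sinh ell, with cosh ell = median_cosh t *)
  set (u := median_cosh t). set (q := sqrt (u * u - 1)).
  assert (hu : 1 <= u) by (apply median_cosh_ge_1; lra).
  assert (hq : q * q = u * u - 1) by (apply sqrt_sqrt; nra).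
  unfold hdist in hrat.
  rewrite (equilateral_median_cosh A B C M a), exp_arcosh in hrat by assumption.
  destruct (rational_cosh_sinh _ u q eq_refl ltac:(lra) hrat) as [ru rq].
  apply (median_sinh_irrational t q ht); [| exact rq | exact hq].
  apply rational_from_side; [lra | | exact ru].
  destruct hyp as [rexp | rangle].
  - now rewrite <- Ea.
  - apply (rational_square_from_angle t q ht (sqrt_pos _) hq rq).
    now rewrite <- Ea, <- (equilateral_angle A B C a).
Qed.
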